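(* Let $\gamma>0$, $\gamma\neq1$ be constant. If $\gamma$ is irrational, then $N^{\rm alg}_{\mathbb{R}}(r)=N^{\rm geom}_{\mathbb{R}}(r)$ for all $r$. If $\gamma=p/q$ with $p,q$ positive coprime integers, then, as $r\to\infty$, \[ N^{\rm alg}_{\mathbb{R}}(r)=\Bigl(\Bigl|1-\frac pq\Bigr|+\frac2q\Bigr)\frac{r}{\pi}+O(1). \]
   Context: Half-line problem: for $\lambda\neq0$, find $(u,v)$ on $[0,1]$ with $-u''-\lambda^2u=0$, $-v''-\lambda^2\gamma^2v=0$, $u(0)=v(0)=0$, $u(1)=v(1)$, $u'(1)=v'(1)$; $\lambda$ is an ITE if a nontrivial pair exists. ITEs are the nonzero zeros of $F(\lambda)=\gamma\sin\lambda\cos(\gamma\lambda)-\sin(\gamma\lambda)\cos\lambda$. The algebraic multiplicity of an ITE is its order as a zero of $F$; the geometric multiplicity is $1$. $N^{\rm alg}_{\mathbb{R}}(r)$ (resp. $N^{\rm geom}_{\mathbb{R}}(r)$) is the number of real ITEs in $(0,r]$ counted with algebraic (resp. geometric) multiplicity. *)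

From Stdlib Require Import Reals Lra Lia List.
Import ListNotations.
Open Scope R_scope.

(* Characteristic function: ITEs are the nonzero zeros of F. *)
Definition F (gamma x : R) : R :=
  gamma * sin x * cos (gamma * x) - sin (gamma * x) * cos x.

Definition zero_order (f : R -> R) (x0 : R) (m : nat) : Prop :=
  exists d : nat -> R -> R,
    (forall x, d 0%nat x = f x) /\
    (forall (k : nat) (x : R), derivable_pt_lim (d k) x (d (S k) x)) /\
    (forall k : nat, (k < m)%nat -> d k x0 = 0) /\
    d m x0 <> 0.

Definition real_ITEs_upto (gamma r : R) (l : list R) : Prop :=
  NoDup l /\ forall x, In x l <-> (0 < x <= r /\ F gamma x = 0).

(* N^alg_R(r) = n : ITEs in (0,r] counted with algebraic multiplicity
   (order of zero of F). *)
Definition Nalg (gamma r : R) (n : nat) : Prop :=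
  exists (l : list R) (ms : list nat),
    real_ITEs_upto gamma r l /\
    Forall2 (fun x m => zero_order (F gamma) x m) l ms /\
    n = list_sum ms.

(* N^geom_R(r) = n : each ITE has geometric multiplicity 1. *)
Definition Ngeom (gamma r : R) (n : nat) : Prop :=
  exists l : list R, real_ITEs_upto gamma r l /\ n = length l.

Definition irrational (x : R) : Prop :=
  ~ exists (a b : Z), b <> 0%Z /\ x = IZR a / IZR b.

(* With
   D(x) = (g+1) + (g-1) cos(2gx) > 0 one has 2 F = D sqrt(1+v^2) sin(phase),
   where phase(x) = (1-g) x + atan v(x) and v = (g-1) sin(2gx) / D.  The phase
   is strictly monotone (its derivative has the sign of 1-g and vanishes only
   where sin(gx) = 0), starts at 0 and stays within pi/2 of (1-g) x.  Hence
   the ITEs in (0,r] are the points where the signed phase crosses a positive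
   multiple of pi; there are floor(|phase(r)| / pi) of them.

   Multiplicities come from the explicit derivatives of F: a zero with
   sin x <> 0 is simple, a zero with sin x = 0 (then also sin(gx) = 0) has
   order exactly 3.  So N_alg = N_geom + 2 * #{ITEs in pi Z}.  For irrational
   g no ITE lies in pi Z; for g = p/q (coprime) these ITEs are exactly the
   positive multiples of q pi, of which there are floor(r / (q pi)). *)

From Coquelicot Require Import Coquelicot.
From Stdlib Require Import Reals Lra Lia List ZArith Permutation FunctionalExtensionality.
Open Scope R_scope.

Definition denom (g x : R) : R := (g + 1) + (g - 1) * cos (2 * g * x).
Definition slope (g x : R) : R := (g - 1) * sin (2 * g * x) / denom g x.
Definition phase (g x : R) : R := (1 - g) * x + atan (slope g x).

(* D^2 + ((g-1) sin 2gx)^2, the denominator of the derivative of the phase. *)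
Definition energy (g x : R) : R := denom g x ^ 2 + ((g - 1) * sin (2 * g * x)) ^ 2.

(* D >= min(2, 2g) > 0, so the amplitude-phase form below is well defined. *)
Lemma denom_pos g x : 0 < g -> 0 < denom g x.
Proof.
  intros Hg. unfold denom. destruct (COS_bound (2 * g * x)).
  destruct (Rle_dec g 1); nra.
Qed.

Lemma energy_pos g x : 0 < g -> 0 < energy g x.
Proof.
  intros Hg. unfold energy. pose proof (pow_lt _ 2 (denom_pos g x Hg)).
  pose proof (pow2_ge_0 ((g - 1) * sin (2 * g * x))). lra.
Qed.

Lemma F_phase_form g x : 0 < g ->
  2 * F g x = denom g x * sqrt (1 + (slope g x)²) * sin (phase g x).
Proof.
  intros Hg. pose proof (denom_pos g x Hg) as HD.
  assert (Hq : 0 < sqrt (1 + (slope g x)²)).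
  { apply sqrt_lt_R0. pose proof (Rle_0_sqr (slope g x)). lra. }
  unfold phase. rewrite sin_plus, sin_atan, cos_atan.
  transitivity (denom g x * sin ((1 - g) * x) + (g - 1) * sin (2 * g * x) * cos ((1 - g) * x)).
  2: { unfold slope in *. field. split; lra. }
  unfold F, denom.
  replace ((1 - g) * x) with (x - g * x) by ring.
  replace (2 * g * x) with (2 * (g * x)) by ring.
  rewrite sin_minus, cos_minus, sin_2a, cos_2a.
  pose proof (sin2_cos2 (g * x)) as H. unfold Rsqr in H.
  set (s := sin x). set (c := cos x). set (sg := sin (g * x)) in *. set (cg := cos (g * x)) in *.
  apply Rminus_diag_uniq.
  transitivity ((1 - g) * (cg * cg + sg * sg - 1) * (s * cg + c * sg)); [ring|].
  replace (cg * cg + sg * sg - 1) with 0 by lra. ring.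
Qed.

Lemma F_zero_iff_phase g x : 0 < g -> (F g x = 0 <-> sin (phase g x) = 0).
Proof.
  intros Hg. pose proof (F_phase_form g x Hg) as H. pose proof (denom_pos g x Hg).
  assert (0 < sqrt (1 + (slope g x)²)).
  { apply sqrt_lt_R0. pose proof (Rle_0_sqr (slope g x)). lra. }
  assert (Hamp : 0 < denom g x * sqrt (1 + (slope g x)²)) by nra.
  split; intros Hz; rewrite Hz in H.
  - apply (Rmult_eq_reg_l (denom g x * sqrt (1 + (slope g x)²))); lra.
  - lra.
Qed.

Lemma phase_deriv g x : 0 < g ->
  is_derive (phase g) x (2 * (1 - g ^ 2) * (1 - cos (2 * g * x)) / energy g x).
Proof.
  intros Hg. pose proof (denom_pos g x Hg) as HD.
  unfold phase, slope, energy. unfold denom in *.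
  auto_derive; [lra|].
  pose proof (sin2_cos2 (2 * g * x)) as Hsc. unfold Rsqr in Hsc.
  set (s := sin (2 * g * x)) in *. set (c := cos (2 * g * x)) in *.
  set (D := g + 1 + (g - 1) * c) in *.
  assert (HE : 0 < D ^ 2 + ((g - 1) * s) ^ 2).
  { pose proof (pow2_ge_0 ((g - 1) * s)). pose proof (pow_lt D 2 HD). lra. }
  transitivity (((1 - g) * (D ^ 2 + (g - 1) ^ 2 * (s * s))
                 + 2 * g * (g - 1) * (c * D + (g - 1) * (s * s))) / (D ^ 2 + ((g - 1) * s) ^ 2)).
  { field. split; lra. }
  f_equal. replace (s * s) with (1 - c * c) by lra. unfold D. ring.
Qed.

(* The sign of 1 - g; multiplying the phase by it makes it increasing. *)
Definition sign_1mg (g : R) : R := if Rlt_dec g 1 then 1 else -1.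
Definition uphase (g x : R) : R := sign_1mg g * phase g x.

Lemma sign_1mg_spec g : 0 < g -> g <> 1 ->
  0 < sign_1mg g * (1 - g ^ 2) /\ sign_1mg g * (1 - g) = Rabs (1 - g).
Proof.
  intros Hg H. unfold sign_1mg. destruct (Rlt_dec g 1).
  - split; [nra|]. rewrite Rabs_right by lra. ring.
  - split; [nra|]. rewrite Rabs_left by lra. ring.
Qed.

Lemma uphase_deriv g x : 0 < g ->
  derivable_pt_lim (uphase g) x
    (4 * (sign_1mg g * (1 - g ^ 2)) * (sin (g * x) * sin (g * x)) / energy g x).
Proof.
  intros Hg. pose proof (energy_pos g x Hg).
  replace (4 * (sign_1mg g * (1 - g ^ 2)) * (sin (g * x) * sin (g * x)) / energy g x)
    with (sign_1mg g * (2 * (1 - g ^ 2) * (1 - cos (2 * g * x)) / energy g x)).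
  - apply derivable_pt_lim_scal, is_derive_Reals, phase_deriv, Hg.
  - replace (2 * g * x) with (2 * (g * x)) by ring. rewrite cos_2a_sin. field. lra.
Qed.

Lemma strict_increasing_of_deriv (f f' : R -> R) :
  (forall x, derivable_pt_lim f x (f' x)) ->
  (forall x, 0 <= f' x) ->
  (forall x, exists v, x < v /\ forall c, x < c < v -> 0 < f' c) ->
  forall x y, x < y -> f x < f y.
Proof.
  intros Hd Hnn Hpos x y Hxy.
  assert (Hmono : forall a b, a < b -> f a <= f b).
  { intros a b Hab. destruct (MVT_cor2 f f' a b Hab (fun c _ => Hd c)) as [c [Hc _]].
    pose proof (Hnn c). nra. }
  destruct (Hpos x) as [v [Hxv Hv]].
  pose proof (Rmin_l y v) as Hwy. pose proof (Rmin_r y v) as Hwv.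
  assert (Hxw : x < Rmin y v) by (apply Rmin_glb_lt; lra).
  destruct (MVT_cor2 f f' x (Rmin y v) Hxw (fun c _ => Hd c)) as [c [Hc Hxc]].
  assert (0 < f' c) by (apply Hv; lra).
  assert (f x < f (Rmin y v)) by nra.
  destruct (Rle_lt_or_eq_dec _ _ Hwy) as [Hlt | Heq].
  - pose proof (Hmono _ _ Hlt). lra.
  - rewrite Heq in *. lra.
Qed.

Lemma sin_scaled_nonzero_right g x : 0 < g ->
  exists v, x < v /\ forall c, x < c < v -> sin (g * c) <> 0.
Proof.
  intros Hg. pose proof PI_RGT_0 as Hpi.
  destruct (base_Int_part (g * x / PI)) as [Hk1 Hk2].
  set (k := Int_part (g * x / PI)) in *.
  assert (Hlo : IZR k * PI <= g * x).
  { replace (g * x) with (g * x / PI * PI) by (field; lra). apply Rmult_le_compat_r; lra. }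
  assert (Hhi : g * x < (IZR k + 1) * PI).
  { replace (g * x) with (g * x / PI * PI) by (field; lra). apply Rmult_lt_compat_r; lra. }
  assert (Hgv : g * ((IZR k + 1) * PI / g) = (IZR k + 1) * PI) by (field; lra).
  exists ((IZR k + 1) * PI / g). split.
  - apply Rmult_lt_reg_l with g; lra.
  - intros c [Hxc Hcv] Hs. apply sin_eq_0_0 in Hs as [j Hj].
    assert (Hgc : g * c < (IZR k + 1) * PI).
    { rewrite <- Hgv. apply Rmult_lt_compat_l; lra. }
    assert (Hkj : IZR k < IZR j) by nra.
    assert (Hjk : IZR j < IZR (k + 1)) by (rewrite plus_IZR; nra).
    apply lt_IZR in Hkj. apply lt_IZR in Hjk. lia.
Qed.

Lemma uphase_increasing g : 0 < g -> g <> 1 ->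
  forall x y, x < y -> uphase g x < uphase g y.
Proof.
  intros Hg Hg1. destruct (sign_1mg_spec g Hg Hg1) as [Hs _].
  apply strict_increasing_of_deriv
    with (fun x => 4 * (sign_1mg g * (1 - g ^ 2)) * (sin (g * x) * sin (g * x)) / energy g x).
  - intros x. apply uphase_deriv, Hg.
  - intros x. pose proof (energy_pos g x Hg). pose proof (Rle_0_sqr (sin (g * x))).
    unfold Rsqr in *. apply Rmult_le_pos; [nra|]. apply Rlt_le, Rinv_0_lt_compat; lra.
  - intros x. destruct (sin_scaled_nonzero_right g x Hg) as [v [Hxv Hv]].
    exists v. split; [exact Hxv|]. intros c Hc. pose proof (energy_pos g c Hg).
    pose proof (Rsqr_pos_lt _ (Hv c Hc)). unfold Rsqr in *.
    apply Rdiv_lt_0_compat; nra.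
Qed.

Lemma uphase_continuous g : 0 < g -> continuity (uphase g).
Proof.
  intros Hg x. apply derivable_continuous_pt. eexists. apply uphase_deriv, Hg.
Qed.

Lemma uphase_0 g : uphase g 0 = 0.
Proof.
  unfold uphase, phase, slope. rewrite !Rmult_0_r, sin_0, !Rmult_0_r.
  unfold Rdiv. rewrite Rmult_0_l, atan_0. ring.
Qed.

Lemma F_zero_iff_uphase g x : 0 < g -> (F g x = 0 <-> exists k : Z, uphase g x = IZR k * PI).
Proof.
  intros Hg. rewrite F_zero_iff_phase by exact Hg.
  assert (E : sin (uphase g x) = sign_1mg g * sin (phase g x)).
  { unfold uphase, sign_1mg. destruct (Rlt_dec g 1).
    - rewrite !Rmult_1_l. reflexivity.
    - replace (-1 * phase g x) with (- phase g x) by ring. rewrite sin_neg. ring. }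
  assert (Hs : sign_1mg g <> 0) by (unfold sign_1mg; destruct (Rlt_dec g 1); lra).
  split.
  - intros H. apply sin_eq_0_0. rewrite E, H. ring.
  - intros H. apply sin_eq_0_1 in H. rewrite E in H.
    destruct (Rmult_integral _ _ H); [contradiction | assumption].
Qed.

(* The increasing phase differs from |1-g| x by at most pi/2 (the atan term). *)
Lemma uphase_linear_bound g r : 0 < g -> g <> 1 ->
  Rabs (uphase g r - Rabs (1 - g) * r) <= PI / 2.
Proof.
  intros Hg Hg1. destruct (sign_1mg_spec g Hg Hg1) as [_ Hs]. rewrite <- Hs.
  unfold uphase, phase. destruct (atan_bound (slope g r)).
  replace (sign_1mg g * ((1 - g) * r + atan (slope g r)) - sign_1mg g * (1 - g) * r)
    with (sign_1mg g * atan (slope g r)) by ring.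
  unfold sign_1mg. destruct (Rlt_dec g 1); apply Rabs_le; lra.
Qed.

Lemma floor_nat (y : R) : 0 <= y -> exists M : nat, INR M <= y < INR M + 1.
Proof.
  intros Hy. destruct (base_Int_part y) as [H1 H2].
  assert (Hz : (-1 < Int_part y)%Z) by (apply lt_IZR; lra).
  exists (Z.to_nat (Int_part y)). rewrite INR_IZR_INZ, Z2Nat.id by lia. lra.
Qed.

Lemma NoDup_same_length (l1 l2 : list R) :
  NoDup l1 -> NoDup l2 -> (forall x, In x l1 <-> In x l2) -> length l1 = length l2.
Proof. intros. apply Permutation_length, NoDup_Permutation; assumption. Qed.

Section LevelCrossings.

Variable psi : R -> R.
Hypothesis psi_cont : continuity psi.
Hypothesis psi_incr : forall x y, x < y -> psi x < psi y.
Hypothesis psi_0 : psi 0 = 0.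

Lemma psi_inj x y : psi x = psi y -> x = y.
Proof.
  intros E. destruct (Rtotal_order x y) as [H | [H | H]]; [| exact H |];
    apply psi_incr in H; lra.
Qed.

Lemma level_attained (r c : R) : 0 <= c <= psi r -> exists x, 0 <= x <= r /\ psi x = c.
Proof.
  intros Hc.
  assert (Hr : 0 <= r).
  { destruct (Rle_or_lt 0 r) as [H | H]; [exact H|]. apply psi_incr in H. lra. }
  destruct (IVT_cor (fun t => psi t - c) 0 r) as [x [Hx Hfx]]; [| exact Hr | |].
  - intros t. apply continuity_pt_minus; [apply psi_cont | apply continuity_pt_const].
    intros a b. reflexivity.
  - rewrite psi_0. nra.
  - exists x. split; [exact Hx | lra].
Qed.

Lemma level_prefix (r : R) (m : nat) : INR m * PI <= psi r ->
  exists l, NoDup l /\ length l = m /\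
    forall x, In x l <-> (0 < x <= r /\ exists k : nat, (1 <= k <= m)%nat /\ psi x = INR k * PI).
Proof.
  pose proof PI_RGT_0 as Hpi.
  induction m as [|m IH]; intros Hm.
  - exists nil. split; [constructor|]. split; [reflexivity|].
    intros x. simpl. split; [tauto|]. intros [_ [k [Hk _]]]. lia.
  - rewrite S_INR in Hm. pose proof (pos_INR m).
    destruct IH as [l [Hnd [Hlen Hin]]]; [nra|].
    destruct (level_attained r (INR (S m) * PI)) as [x [Hx Hpx]]; [rewrite S_INR; nra|].
    assert (Hx0 : 0 < x).
    { destruct Hx as [[Hx | Hx] _]; [exact Hx|]. subst x. rewrite psi_0, S_INR in Hpx. nra. }
    exists (x :: l). split; [|split].
    + constructor; [|exact Hnd]. intros Hl. apply Hin in Hl as [_ [k [Hk Hk']]].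
      rewrite Hpx in Hk'. apply Rmult_eq_reg_r in Hk'; [apply INR_eq in Hk'; lia | lra].
    + simpl. rewrite Hlen. reflexivity.
    + intros y. simpl. rewrite Hin. split.
      * intros [<- | [Hy [k [Hk Hk']]]].
        -- split; [lra|]. exists (S m). split; [lia | exact Hpx].
        -- split; [exact Hy|]. exists k. split; [lia | exact Hk'].
      * intros [Hy [k [Hk Hk']]]. destruct (Nat.eq_dec k (S m)) as [-> | Hne].
        -- left. apply psi_inj. congruence.
        -- right. split; [exact Hy|]. exists k. split; [lia | exact Hk'].
Qed.

Lemma level_count (r : R) : exists l, NoDup l /\
  (forall x, In x l <-> (0 < x <= r /\ exists k : Z, psi x = IZR k * PI)) /\
  (0 <= r -> INR (length l) <= psi r / PI < INR (length l) + 1).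
Proof.
  pose proof PI_RGT_0 as Hpi.
  destruct (Rlt_or_le r 0) as [Hr | Hr].
  { exists nil. split; [constructor|]. split; [|lra].
    intros x. simpl. split; [tauto | lra]. }
  assert (Hpr0 : 0 <= psi r).
  { rewrite <- psi_0. destruct Hr as [Hr | <-]; [left; apply psi_incr, Hr | right; reflexivity]. }
  assert (Hpr : 0 <= psi r / PI) by (apply Rdiv_le_0_compat; lra).
  destruct (floor_nat _ Hpr) as [M HM].
  assert (HMpi : INR M * PI <= psi r < (INR M + 1) * PI).
  { replace (psi r) with (psi r / PI * PI) by (field; lra). split; nra. }
  destruct (level_prefix r M ltac:(lra)) as [l [Hnd [Hlen Hin]]].
  exists l. rewrite Hlen. split; [exact Hnd|]. split; [|intros; exact HM].
  intros x. rewrite Hin. split.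
  - intros [Hx [k [_ Hk]]]. split; [exact Hx|]. exists (Z.of_nat k). rewrite <- INR_IZR_INZ. exact Hk.
  - intros [Hx [k Hk]]. split; [exact Hx|].
    assert (Hp0 : 0 < psi x) by (rewrite <- psi_0; apply psi_incr; lra).
    assert (Hpr2 : psi x <= psi r).
    { destruct (Rle_lt_or_eq_dec _ _ (proj2 Hx)) as [H | ->]; [apply Rlt_le, psi_incr, H | lra]. }
    assert (Hk0 : (0 < k)%Z) by (apply lt_IZR; nra).
    assert (HkM : (k < Z.of_nat M + 1)%Z).
    { apply lt_IZR. rewrite plus_IZR, <- INR_IZR_INZ. nra. }
    exists (Z.to_nat k). split; [lia|]. rewrite INR_IZR_INZ, Z2Nat.id by lia. exact Hk.
Qed.

End LevelCrossings.

(* The k-th derivative of F: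
   F = ((g-1) sin((1+g)x) + (g+1) sin((1-g)x)) / 2, and differentiating
   sin(a x + k pi/2) multiplies by a and shifts the phase by pi/2. *)
Definition Fderiv (g : R) (k : nat) (x : R) : R :=
  (g - 1) / 2 * (1 + g) ^ k * sin ((1 + g) * x + INR k * PI / 2)
  + (g + 1) / 2 * (1 - g) ^ k * sin ((1 - g) * x + INR k * PI / 2).

Lemma sin_quarter_shift u k : sin (u + INR (S k) * PI / 2) = cos (u + INR k * PI / 2).
Proof.
  rewrite S_INR. replace (u + (INR k + 1) * PI / 2) with (u + INR k * PI / 2 + PI / 2) by field.
  rewrite sin_plus, sin_PI2, cos_PI2. ring.
Qed.

Lemma cos_quarter_shift u k : cos (u + INR (S k) * PI / 2) = - sin (u + INR k * PI / 2).
Proof.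
  rewrite S_INR. replace (u + (INR k + 1) * PI / 2) with (u + INR k * PI / 2 + PI / 2) by field.
  rewrite cos_plus, sin_PI2, cos_PI2. ring.
Qed.

Lemma Fderiv_deriv g k x : derivable_pt_lim (Fderiv g k) x (Fderiv g (S k) x).
Proof.
  unfold Fderiv. rewrite !sin_quarter_shift. set (u := INR k * PI / 2).
  assert (H : forall a C, derivable_pt_lim (fun y => C * a ^ k * sin (a * y + u)) x
                                           (C * a ^ (S k) * cos (a * x + u))).
  { intros a C. apply is_derive_Reals. auto_derive; [exact I | simpl; ring]. }
  apply (derivable_pt_lim_plus (fun y => (g - 1) / 2 * (1 + g) ^ k * sin ((1 + g) * y + u))
                               (fun y => (g + 1) / 2 * (1 - g) ^ k * sin ((1 - g) * y + u)));
    apply H.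
Qed.

Lemma Fderiv_0 g x : Fderiv g 0 x = F g x.
Proof.
  unfold Fderiv, F. simpl. rewrite !Rmult_0_l, !Rdiv_0_l, !Rplus_0_r.
  replace ((1 + g) * x) with (x + g * x) by ring. replace ((1 - g) * x) with (x - g * x) by ring.
  rewrite sin_plus, sin_minus. field.
Qed.

Lemma Fderiv_1 g x : Fderiv g 1 x = (1 - g ^ 2) * sin x * sin (g * x).
Proof.
  unfold Fderiv. change 1%nat with (S 0). rewrite !sin_quarter_shift. simpl.
  rewrite !Rmult_0_l, !Rdiv_0_l, !Rplus_0_r.
  replace ((1 + g) * x) with (x + g * x) by ring. replace ((1 - g) * x) with (x - g * x) by ring.
  rewrite cos_plus, cos_minus. field.
Qed.

Lemma Fderiv_2 g x : Fderiv g 2 x =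
  - ((g - 1) / 2 * (1 + g) ^ 2 * sin ((1 + g) * x) + (g + 1) / 2 * (1 - g) ^ 2 * sin ((1 - g) * x)).
Proof.
  unfold Fderiv. change 2%nat with (S (S 0)).
  rewrite !sin_quarter_shift, !cos_quarter_shift. simpl.
  rewrite !Rmult_0_l, !Rdiv_0_l, !Rplus_0_r. ring.
Qed.

Lemma Fderiv_3 g x : Fderiv g 3 x =
  - ((g - 1) / 2 * (1 + g) ^ 3 * cos ((1 + g) * x) + (g + 1) / 2 * (1 - g) ^ 3 * cos ((1 - g) * x)).
Proof.
  unfold Fderiv. change 3%nat with (S (S (S 0))).
  rewrite !sin_quarter_shift, !cos_quarter_shift, !sin_quarter_shift. simpl.
  rewrite !Rmult_0_l, !Rdiv_0_l, !Rplus_0_r. ring.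
Qed.

(* The order of a zero is well defined: the derivatives of f are unique. *)
Lemma zero_order_unique f x m1 m2 : zero_order f x m1 -> zero_order f x m2 -> m1 = m2.
Proof.
  intros [d1 [A1 [B1 [C1 D1]]]] [d2 [A2 [B2 [C2 D2]]]].
  assert (Heq : forall k y, d1 k y = d2 k y).
  { induction k as [|k IH]; intros y; [rewrite A1, A2; reflexivity|].
    assert (Hf : d1 k = d2 k) by (apply functional_extensionality; exact IH).
    apply (uniqueness_limite (d1 k) y); [apply B1 | rewrite Hf; apply B2]. }
  destruct (Nat.lt_trichotomy m1 m2) as [H | [H | H]]; [| exact H |]; exfalso.
  - apply D1. rewrite Heq. apply C2, H.
  - apply D2. rewrite <- Heq. apply C1, H.
Qed.

Lemma ITE_sin_iff g x : 0 < g -> F g x = 0 -> (sin x = 0 <-> sin (g * x) = 0).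
Proof.
  intros Hg HF. unfold F in HF.
  pose proof (sin2_cos2 x) as H1. pose proof (sin2_cos2 (g * x)) as H2. unfold Rsqr in *.
  split; intros Hs; rewrite Hs in *.
  - assert (Hc : cos x <> 0) by nra.
    apply (Rmult_eq_reg_r (cos x)); [lra | exact Hc].
  - assert (Hc : cos (g * x) <> 0) by nra.
    apply (Rmult_eq_reg_r (g * cos (g * x))); [lra | apply Rmult_integral_contrapositive; lra].
Qed.

Lemma zero_order_simple g x : 0 < g -> g <> 1 -> F g x = 0 -> sin x <> 0 ->
  zero_order (F g) x 1.
Proof.
  intros Hg Hg1 HF Hs. exists (Fderiv g). split; [|split; [|split]].
  - apply Fderiv_0.
  - intros. apply Fderiv_deriv.
  - intros k Hk. replace k with 0%nat by lia. rewrite Fderiv_0. exact HF.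
  - rewrite Fderiv_1.
    assert (Hsg : sin (g * x) <> 0) by (rewrite <- (ITE_sin_iff g x Hg HF); exact Hs).
    assert (Hg2 : 1 - g ^ 2 <> 0).
    { replace (1 - g ^ 2) with ((1 - g) * (1 + g)) by ring.
      apply Rmult_integral_contrapositive; lra. }
    repeat (apply Rmult_integral_contrapositive; split); assumption.
Qed.

Lemma zero_order_triple g x : 0 < g -> g <> 1 -> F g x = 0 -> sin x = 0 ->
  zero_order (F g) x 3.
Proof.
  intros Hg Hg1 HF Hs.
  assert (Hsg : sin (g * x) = 0) by (rewrite <- (ITE_sin_iff g x Hg HF); exact Hs).
  exists (Fderiv g). split; [|split; [|split]].
  - apply Fderiv_0.
  - intros. apply Fderiv_deriv.
  - intros k Hk. destruct k as [|[|[|k]]]; [| | | lia].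
    + rewrite Fderiv_0. exact HF.
    + rewrite Fderiv_1, Hs. ring.
    + rewrite Fderiv_2.
      replace ((1 + g) * x) with (x + g * x) by ring. replace ((1 - g) * x) with (x - g * x) by ring.
      rewrite sin_plus, sin_minus, Hs, Hsg. ring.
  - rewrite Fderiv_3.
    replace ((1 + g) * x) with (x + g * x) by ring. replace ((1 - g) * x) with (x - g * x) by ring.
    rewrite cos_plus, cos_minus, Hs, Hsg.
    pose proof (sin2_cos2 x) as H1. pose proof (sin2_cos2 (g * x)) as H2.
    unfold Rsqr in *. rewrite Hs in H1. rewrite Hsg in H2.
    assert (Hc : cos x <> 0) by nra. assert (Hcg : cos (g * x) <> 0) by nra.
    replace (- ((g - 1) / 2 * (1 + g) ^ 3 * (cos x * cos (g * x) - 0 * 0)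
                + (g + 1) / 2 * (1 - g) ^ 3 * (cos x * cos (g * x) + 0 * 0)))
      with (- 2 * g * (g - 1) * (g + 1) * (cos x * cos (g * x))) by field.
    repeat (apply Rmult_integral_contrapositive; split); lra.
Qed.

Definition on_pi_lattice (x : R) : bool := if Req_EM_T (sin x) 0 then true else false.
Definition ite_order (x : R) : nat := if on_pi_lattice x then 3%nat else 1%nat.

Lemma ite_order_spec g x : 0 < g -> g <> 1 -> F g x = 0 -> zero_order (F g) x (ite_order x).
Proof.
  intros. unfold ite_order, on_pi_lattice. destruct (Req_EM_T (sin x) 0).
  - apply zero_order_triple; assumption.
  - apply zero_order_simple; assumption.
Qed.

Lemma ITE_enum g r : 0 < g -> g <> 1 -> exists l, real_ITEs_upto g r l /\
  (0 <= r -> INR (length l) <= uphase g r / PI < INR (length l) + 1).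
Proof.
  intros Hg Hg1.
  destruct (level_count (uphase g) (uphase_continuous g Hg) (uphase_increasing g Hg Hg1)
              (uphase_0 g) r) as [l [Hnd [Hin HM]]].
  exists l. split; [split; [exact Hnd|] | exact HM].
  intros x. rewrite Hin, (F_zero_iff_uphase g x Hg). tauto.
Qed.

Lemma real_ITEs_length g r l1 l2 :
  real_ITEs_upto g r l1 -> real_ITEs_upto g r l2 -> length l1 = length l2.
Proof.
  intros [N1 H1] [N2 H2]. apply NoDup_same_length; [exact N1 | exact N2 |].
  intros x. rewrite H1, H2. tauto.
Qed.

Lemma Nalg_exists g r : 0 < g -> g <> 1 -> exists n, Nalg g r n.
Proof.
  intros Hg Hg1. destruct (ITE_enum g r Hg Hg1) as [l [Hl _]].
  exists (list_sum (map ite_order l)), l, (map ite_order l).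
  split; [exact Hl|]. split; [|reflexivity].
  assert (HF : forall x, In x l -> F g x = 0) by (intros x Hx; apply Hl, Hx).
  clear Hl. induction l as [|x l IH]; constructor.
  - apply ite_order_spec; [exact Hg | exact Hg1 | apply HF; left; reflexivity].
  - apply IH. intros y Hy. apply HF. right. exact Hy.
Qed.

Lemma Nalg_formula g r n : 0 < g -> g <> 1 -> Nalg g r n ->
  exists l, real_ITEs_upto g r l /\ n = (length l + 2 * length (filter on_pi_lattice l))%nat.
Proof.
  intros Hg Hg1 [l [ms [Hl [Hms ->]]]]. exists l. split; [exact Hl|].
  assert (HF : forall x, In x l -> F g x = 0) by (intros x Hx; apply Hl, Hx).
  clear Hl. induction Hms as [|x m l ms Hm Hms IH]; [reflexivity|]. simpl.
  rewrite IH by (intros y Hy; apply HF; right; exact Hy).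
  assert (Hx : F g x = 0) by (apply HF; left; reflexivity).
  rewrite <- (zero_order_unique (F g) x (ite_order x) m (ite_order_spec g x Hg Hg1 Hx) Hm).
  unfold ite_order. destruct (on_pi_lattice x); simpl; lia.
Qed.

Lemma lattice_ITEs_spec g r l : real_ITEs_upto g r l ->
  NoDup (filter on_pi_lattice l) /\
  forall x, In x (filter on_pi_lattice l) <-> (0 < x <= r /\ F g x = 0 /\ sin x = 0).
Proof.
  intros [N H]. split; [apply NoDup_filter, N|].
  intros x. rewrite filter_In, H. unfold on_pi_lattice.
  destruct (Req_EM_T (sin x) 0); split; intuition discriminate.
Qed.

Lemma irrational_no_lattice_ITE g x : 0 < g -> irrational g -> 0 < x -> F g x = 0 -> sin x <> 0.
Proof.
  intros Hg Hirr Hx HF Hs. pose proof PI_RGT_0.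
  pose proof (proj1 (ITE_sin_iff g x Hg HF) Hs) as Hsg.
  apply sin_eq_0_0 in Hs as [k Hk]. apply sin_eq_0_0 in Hsg as [j Hj].
  assert (Hk0 : IZR k <> 0) by (intros E; rewrite E in Hk; lra).
  apply Hirr. exists j, k. split; [intros ->; exact (Hk0 eq_refl)|].
  rewrite Hk in Hj. apply (Rmult_eq_reg_r (IZR k * PI)).
  - rewrite Hj. field. exact Hk0.
  - apply Rmult_integral_contrapositive. split; lra.
Qed.

Lemma Nalg_eq_Ngeom_irrational g r n m : 0 < g -> g <> 1 -> irrational g ->
  Nalg g r n -> Ngeom g r m -> n = m.
Proof.
  intros Hg Hg1 Hirr Hn [l2 [Hl2 ->]].
  destruct (Nalg_formula g r n Hg Hg1 Hn) as [l [Hl ->]].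
  assert (Hnone : filter on_pi_lattice l = nil).
  { destruct (filter on_pi_lattice l) as [|x l'] eqn:E; [reflexivity|].
    assert (Hx : In x (filter on_pi_lattice l)) by (rewrite E; left; reflexivity).
    apply (lattice_ITEs_spec g r l Hl) in Hx as [Hx [HF Hs]].
    exfalso. exact (irrational_no_lattice_ITE g x Hg Hirr (proj1 Hx) HF Hs). }
  rewrite Hnone, (real_ITEs_length g r l l2 Hl Hl2). simpl. lia.
Qed.

Lemma rational_lattice_ITE p q x : (0 < p)%nat -> (0 < q)%nat -> Nat.gcd p q = 1%nat -> 0 < x ->
  (F (INR p / INR q) x = 0 /\ sin x = 0 <-> exists k : Z, x / INR q = IZR k * PI).
Proof.
  intros Hp Hq Hgcd Hx. pose proof PI_RGT_0 as Hpi.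
  assert (HqR : 0 < INR q) by (apply lt_0_INR; lia).
  assert (HpR : 0 < INR p) by (apply lt_0_INR; lia).
  assert (Hg : 0 < INR p / INR q) by (apply Rdiv_lt_0_compat; assumption).
  split.
  - intros [HF Hs]. pose proof (proj1 (ITE_sin_iff _ x Hg HF) Hs) as Hsg.
    apply sin_eq_0_0 in Hs as [k Hk]. apply sin_eq_0_0 in Hsg as [j Hj].
    rewrite Hk in Hj.
    (* p k = q j, and gcd(p, q) = 1 forces q | k *)
    assert (E : (Z.of_nat p * k)%Z = (j * Z.of_nat q)%Z).
    { apply eq_IZR. rewrite !mult_IZR, <- !INR_IZR_INZ.
      apply (Rmult_eq_reg_r (PI / INR q)); [|apply Rgt_not_eq, Rdiv_lt_0_compat; lra].
      replace (INR p * IZR k * (PI / INR q)) with (INR p / INR q * (IZR k * PI)) by (field; lra).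
      rewrite Hj. field. lra. }
    assert (Hk0 : (0 < k)%Z) by (apply lt_IZR; nra).
    assert (Hd : Nat.divide q (p * Z.to_nat k)) by (exists (Z.to_nat j); lia).
    apply Nat.gauss in Hd; [|rewrite Nat.gcd_comm; exact Hgcd].
    destruct Hd as [k' Hk']. exists (Z.of_nat k'). rewrite Hk.
    replace k with (Z.of_nat (Z.to_nat k)) by lia.
    rewrite Hk', Nat2Z.inj_mul, mult_IZR, <- !INR_IZR_INZ. field. lra.
  - intros [k Hk].
    assert (Hx' : x = IZR (k * Z.of_nat q) * PI).
    { rewrite mult_IZR, <- INR_IZR_INZ.
      replace x with (x / INR q * INR q) by (field; lra). rewrite Hk. ring. }
    assert (Hs : sin x = 0) by (apply sin_eq_0_1; exists (k * Z.of_nat q)%Z; exact Hx').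
    assert (Hsg : sin (INR p / INR q * x) = 0).
    { apply sin_eq_0_1. exists (k * Z.of_nat p)%Z.
      rewrite Hx', !mult_IZR, <- !INR_IZR_INZ. field. lra. }
    split; [|exact Hs]. unfold F. rewrite Hs, Hsg. ring.
Qed.

(* Their number in (0, r] is floor(r / (q pi)), by counting level crossings of x / q. *)
Lemma rational_lattice_count p q r l : (0 < p)%nat -> (0 < q)%nat -> Nat.gcd p q = 1%nat ->
  0 <= r -> real_ITEs_upto (INR p / INR q) r l ->
  INR (length (filter on_pi_lattice l)) <= r / INR q / PI < INR (length (filter on_pi_lattice l)) + 1.
Proof.
  intros Hp Hq Hgcd Hr Hl.
  assert (HqR : 0 < INR q) by (apply lt_0_INR; lia).
  set (scale := fun x => x / INR q).
  assert (Hd : forall x, derivable_pt_lim scale x (/ INR q)).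
  { intros x. apply is_derive_Reals. unfold scale. auto_derive; [exact I | field; lra]. }
  assert (Hc : continuity scale) by (intros x; apply derivable_continuous_pt; eexists; apply Hd).
  assert (Hi : forall x y, x < y -> scale x < scale y).
  { intros x y Hxy. unfold scale, Rdiv. apply Rmult_lt_compat_r; [apply Rinv_0_lt_compat|]; lra. }
  assert (H0 : scale 0 = 0) by (unfold scale, Rdiv; ring).
  destruct (level_count scale Hc Hi H0 r) as [l2 [N2 [Hin2 HJ]]].
  destruct (lattice_ITEs_spec _ r l Hl) as [Nf Hf].
  replace (length (filter on_pi_lattice l)) with (length l2); [exact (HJ Hr)|].
  apply NoDup_same_length; [exact N2 | exact Nf |]. intros x. rewrite Hf, Hin2.
  split; intros [Hx HH]; split; try exact Hx;
    apply (rational_lattice_ITE p q x Hp Hq Hgcd (proj1 Hx)), HH.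
Qed.

(* N_alg(r) = floor(uphase r / pi) + 2 floor(r / (q pi)), and uphase r is
   within pi/2 of |1 - p/q| r. *)
Lemma Nalg_rational_estimate p q r n : (0 < p)%nat -> (0 < q)%nat -> Nat.gcd p q = 1%nat ->
  INR p / INR q <> 1 -> 0 <= r -> Nalg (INR p / INR q) r n ->
  Rabs (INR n - (Rabs (1 - INR p / INR q) + 2 / INR q) * r / PI) <= 4.
Proof.
  intros Hp Hq Hgcd Hg1 Hr Hn. set (g := INR p / INR q) in *.
  pose proof PI_RGT_0 as Hpi.
  assert (HqR : 0 < INR q) by (apply lt_0_INR; lia).
  assert (Hg : 0 < g) by (apply Rdiv_lt_0_compat; [apply lt_0_INR; lia | exact HqR]).
  destruct (Nalg_formula g r n Hg Hg1 Hn) as [l [Hl ->]].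
  destruct (ITE_enum g r Hg Hg1) as [l' [Hl' HM]].
  rewrite (real_ITEs_length g r l l' Hl Hl'), plus_INR, mult_INR.
  pose proof (HM Hr) as HM'. pose proof (rational_lattice_count p q r l Hp Hq Hgcd Hr Hl) as HJ.
  pose proof (uphase_linear_bound g r Hg Hg1) as Hb.
  set (M := INR (length l')) in *. set (J := INR (length (filter on_pi_lattice l))) in *.
  set (a := uphase g r) in *. set (b := Rabs (1 - g) * r) in *.
  apply Rabs_le_between in Hb.
  assert (Hab : - (1 / 2) <= a / PI - b / PI <= 1 / 2).
  { assert (Ht : a - b = (a / PI - b / PI) * PI) by (field; lra). rewrite Ht in Hb. split; nra. }
  replace ((Rabs (1 - g) + 2 / INR q) * r / PI) with (b / PI + 2 * (r / INR q / PI))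
    by (unfold b; field; lra).
  apply Rabs_le. simpl (INR 2). lra.
Qed.

Theorem theorem3 (gamma : R) (Hpos : 0 < gamma) (Hne1 : gamma <> 1) :
  (irrational gamma ->
     forall r : R,
       (exists n, Nalg gamma r n) /\ (exists m, Ngeom gamma r m) /\
       (forall n m, Nalg gamma r n -> Ngeom gamma r m -> n = m)) /\
  (forall p q : nat, (0 < p)%nat -> (0 < q)%nat -> Nat.gcd p q = 1%nat ->
     gamma = INR p / INR q ->
     exists C R0 : R, forall r : R, R0 <= r ->
       (exists n, Nalg gamma r n) /\
       (forall n, Nalg gamma r n ->
          Rabs (INR n - (Rabs (1 - INR p / INR q) + 2 / INR q) * r / PI) <= C)).
Proof.
  split.
  - intros Hirr r. split; [apply Nalg_exists; assumption|]. split.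
    + destruct (ITE_enum gamma r Hpos Hne1) as [l [Hl _]]. exists (length l), l. split; [exact Hl | reflexivity].
    + intros n m. apply Nalg_eq_Ngeom_irrational; assumption.
  - intros p q Hp Hq Hgcd Hg. exists 4, 0. intros r Hr.
    split; [apply Nalg_exists; assumption|].
    intros n Hn. subst gamma. apply Nalg_rational_estimate; assumption.
Qed.
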